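(* Let $p_0:(0,2/5]\times(0,\infty)\to(0,\infty)$ be any function. Call a tuple $(\psi,\theta,\epsilon,C,t,K,f,g,V,W,\mathcal E)$ a counterexample if: $\epsilon\in(0,2/5]$, $C>0$; $\psi,\theta:\mathbb N\to\mathbb R_{\ge0}$ are finitely supported; $f,g:\mathbb N\to\mathbb R_{\ge0}$ are multiplicative with $(1\star f)(n)\le n$ and $(1\star g)(n)\le n$ for all $n\ge1$; $V,W\subseteq\mathbb N$, $t\ge1$, $K\in\mathbb R$; $\mathcal E\subseteq \mathcal E_{\psi,\theta}^{t,K}\cap(V\times W)$; and $$\mu_{\psi,\theta}^{f,g}(\mathcal E) > (100e^{C})^{P_{\psi,\theta}(\epsilon, C)}(\operatorname{Log} t)^{\frac{1}{2}(e^{40C}-1)}\big(\mu_{\psi}^{f}(V)\mu_{\theta}^{g}(W)e^{-CK}\big)^{\frac{1}{2}+\epsilon}.$$ Let $(\psi,\theta,\epsilon,C,t,K,f,g,V,W,\mathcal E)$ be a counterexample with $\lvert\mathcal P_{\psi,\theta}\rvert$ minimal among all counterexamples, and let $p\in\mathcal P_{\psi,\theta}$. For integers $i,j\ge0$ let $V_i=\{v\in V:\nu_p(v)=i\}$, $W_j=\{w\in W:\nu_p(w)=j\}$, $m(i,j)=\frac{\mu_{\psi,\theta}^{f,g}(\mathcal E\cap(V_i\times W_j))}{\mu_{\psi,\theta}^{f,g}(\mathcal E)}$, $\alpha_i=\mu_\psi^f(V_i)/\mu_\psi^f(V)$, $\beta_j=\mu_\theta^g(W_j)/\mu_\theta^g(W)$,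 and $q=\frac{2}{1-2\epsilon}$, $q'=\frac{2}{1+2\epsilon}$. Then for all $i,j\ge0$, $$m(i,j)\leq (100e^{C})^{-\mathbf 1_{p\leq p_0(\epsilon, C)}}\,p^{-\frac{\lvert i-j\rvert}{q}}\big(\alpha_i \beta_j e^{\mathbf 1_{i\neq j}\cdot C}\big)^{\frac{1}{q'}}.$$
   Context: For $v,w\in\mathbb N$, $t\geq1$: $\omega_t(v,w) = \lvert\{ p \text{ prime}\le t : p\mid \frac{vw}{\gcd(v,w)^2}\}\rvert$; $D_{\psi,\theta}(v,w) = \frac{\max(w\psi(v),v\theta(w))}{\gcd(v,w)}$. $\mu_\psi^f(v)=\frac{f(v)\psi(v)}{v}$, $\mu_\psi^f(V)=\sum_{v\in V}\mu_\psi^f(v)$, $\mu_{\psi,\theta}^{f,g}(\mathcal E)=\sum_{(v,w)\in\mathcal E}\mu_\psi^f(v)\mu_\theta^g(w)$. $V_\psi=\operatorname{supp}\psi$, $W_\theta=\operatorname{supp}\theta$, $\mathcal E_{\psi,\theta}^{t,K}=\{(v,w)\in V_\psi\times W_\theta : D_{\psi,\theta}(v,w)\le 1,\ \omega_t(v,w)\ge K\}$. $\mathcal P_{\psi,\theta}=\{p \text{ prime}: \exists (v,w)\in V_\psi\times W_\theta,\ p\mid vw\}$ and $P_{\psi,\theta}(\epsilon,C)=p_0(\epsilon,C)+\lvert\mathcal P_{\psi,\theta}\cap[1,p_0(\epsilon,C)]\rvert$. $(1\star f)(n)=\sum_{d\mid n}f(d)$. $\operatorname{Log} t=\max\{1,\log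 t\}$. $\nu_p$ is the $p$-adic valuation; $\mathbf 1_S$ is $1$ if the condition $S$ holds and $0$ otherwise. *)

From HB Require Import structures.
From mathcomp Require Import all_boot all_order all_algebra finmap.
From mathcomp Require Import all_classical all_reals all_analysis.
Set Implicit Arguments. Unset Strict Implicit. Unset Printing Implicit Defensive.
Import Order.TTheory GRing.Theory Num.Theory.
Local Open Scope classical_set_scope.
Local Open Scope ring_scope.

Section Defs.
Variable R : realType.

Definition supp (psi : nat -> R) : set nat := [set n | (0 < n)%N /\ psi n != 0].

Definition omega_t (t : R) (v w : nat) : nat :=
  size [seq p <- primes ((v * w) %/ (gcdn v w) ^ 2) | (p%:R <= t)%R].

Definition Dpt (psi theta : nat -> R) (v w : nat) : R :=
  Num.max (w%:R * psi v) (v%:R * theta w) / (gcdn v w)%:R.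

Definition mu1 (f psi : nat -> R) (v : nat) : R := f v * psi v / v%:R.

Definition muS (f psi : nat -> R) (V : set nat) : R := \sum_(v \in V) mu1 f psi v.

Definition muE (f g psi theta : nat -> R) (E : set (nat * nat)) : R :=
  \sum_(x \in E) (mu1 f psi x.1 * mu1 g theta x.2).

Definition Eset (psi theta : nat -> R) (t K : R) : set (nat * nat) :=
  [set x | supp psi x.1 /\ supp theta x.2 /\ Dpt psi theta x.1 x.2 <= 1
           /\ K <= (omega_t t x.1 x.2)%:R].

Definition Pset (psi theta : nat -> R) : set nat :=
  [set p | prime p /\ exists v w, supp psi v /\ supp theta w /\ (p %| v * w)%N].

Definition cardP (psi theta : nat -> R) : nat := #|` fset_set (Pset psi theta) |.

Definition Pbig (p0 : R -> R -> R) (psi theta : nat -> R) (eps C : R) : R :=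
  p0 eps C + (#|` fset_set (Pset psi theta `&` [set p | (1 <= p)%N /\ p%:R <= p0 eps C]) |)%:R.

Definition Logt (t : R) : R := Num.max 1 (ln t).

Definition conv1 (f : nat -> R) (n : nat) : R := \sum_(d <- divisors n) f d.

Definition multiplicative (f : nat -> R) : Prop :=
  f 1%N = 1 /\ forall m n, (0 < m)%N -> (0 < n)%N -> coprime m n -> f (m * n)%N = f m * f n.

Definition admissible_fun (f : nat -> R) : Prop :=
  (forall n, (0 < n)%N -> 0 <= f n) /\ multiplicative f /\
  (forall n, (0 < n)%N -> conv1 f n <= n%:R).

Definition nonneg_fin_supp (psi : nat -> R) : Prop :=
  (forall n, (0 < n)%N -> 0 <= psi n) /\ finite_set (supp psi).

Definition counterexample (p0 : R -> R -> R) (psi theta : nat -> R) (eps C t K : R)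
  (f g : nat -> R) (V W : set nat) (E : set (nat * nat)) : Prop :=
  [/\ 0 < eps <= 2 / 5, 0 < C,
      nonneg_fin_supp psi /\ nonneg_fin_supp theta,
      admissible_fun f /\ admissible_fun g &
      [/\ 1 <= t,
      E `<=` Eset psi theta t K `&` (V `*` W) &
      muE f g psi theta E >
        (100 * expR C) `^ (Pbig p0 psi theta eps C)
        * (Logt t) `^ ((expR (40 * C) - 1) / 2)
        * (muS f psi V * muS g theta W * expR (- (C * K))) `^ (1 / 2 + eps)]].

End Defs.

(* Strip the prime p from the pairs of E with p-adic valuations (i, j): for
   v = p^i v', w = p^j w' with p not dividing v' w', the rescaled weights
   psi'(v') = p^(j-i) psi(p^i v') and theta'(w') = p^(i-j) theta(p^j w')
   (truncated subtractions, so one factor is 1) leave D unchanged and lower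
   omega_t by at most [i <> j].  The stripped pairs therefore form a tuple that
   meets every requirement of a counterexample with K - [i <> j] in place of K;
   since p divides nothing in its supports it has fewer primes, so by minimality
   its size inequality fails.  Each measure of the fibre factors through the
   weight f(p^i) / (p^i p^(j-i)) <= p^-(j-i) (as f(n) <= (1*f)(n) <= n), the
   constant (100 e^C)^P loses one factor 100 e^C when p <= p0, and comparing
   the failed inequality with the original one after splitting the product c of
   the two weights as c^(1/q) c^(1/q') gives the bound. *)

From Pilot Require Import Defs.
From HB Require Import structures.
From mathcomp Require Import all_boot all_order all_algebra finmap.
From mathcomp Require Import all_classical all_reals all_analysis.
From mathcomp Require Import ring lra zify.
Import Order.TTheory GRing.Theory Num.Theory.
Local Open Scope classical_set_scope.
Local Open Scope ring_scope.

Set Implicit Arguments. Unset Strict Implicit. Unset Printing Implicit Defensive.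

Section PadicNat.
Local Open Scope nat_scope.
Variable p : nat.
Hypothesis p_prime : prime p.

Let p_gt0 : 0 < p := prime_gt0 p_prime.

Lemma pfactor_mulI k : injective (muln (p ^ k)).
Proof. by move=> m n /eqP; rewrite eqn_pmul2l ?expn_gt0 ?p_gt0 // => /eqP. Qed.

Lemma logn_pfactor_mul k m : ~~ (p %| m) -> logn p (p ^ k * m) = k.
Proof.
move=> pNm; have m_gt0 : 0 < m by case: m pNm; rewrite ?dvdn0.
rewrite lognM ?expn_gt0 ?p_gt0 // pfactorK // logn_coprime ?addn0 //.
by rewrite prime_coprime.
Qed.

Lemma logn_eq_pfactor_mul n k : 0 < n -> logn p n = k ->
  exists2 m, ~~ (p %| m) & n = p ^ k * m.
Proof.
move=> n_gt0 <-; have [m pm n_eq] := pfactor_coprime p_prime n_gt0.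
by exists m; rewrite -?prime_coprime // {1}n_eq mulnC.
Qed.

Lemma gcdn_pfactor_mul i j a b : ~~ (p %| a) -> ~~ (p %| b) ->
  gcdn (p ^ i * a) (p ^ j * b) = p ^ minn i j * gcdn a b.
Proof.
move=> pNa pNb; wlog le_ij : i j a b pNa pNb / i <= j.
  move=> wlog_ij; have /orP[le_ij|le_ji] := leq_total i j; first exact: wlog_ij.
  by rewrite gcdnC minnC [gcdn a b]gcdnC wlog_ij.
rewrite (minn_idPl le_ij) -(subnKC le_ij) expnD -mulnA -muln_gcdr.
by rewrite Gauss_gcdr // coprime_sym coprimeXl // prime_coprime.
Qed.

Lemma mul_divn_gcdn_sqr_pfactor i j a b : ~~ (p %| a) -> ~~ (p %| b) ->
  (p ^ i * a) * (p ^ j * b) %/ gcdn (p ^ i * a) (p ^ j * b) ^ 2 =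
  p ^ ((i - j) + (j - i)) * (a * b %/ gcdn a b ^ 2).
Proof.
move=> pNa pNb; rewrite gcdn_pfactor_mul // expnMn.
have gcd2_dvd : gcdn a b ^ 2 %| a * b by rewrite dvdn_mul ?dvdn_gcdl ?dvdn_gcdr.
have -> : p ^ i * a * (p ^ j * b) =
    (p ^ minn i j) ^ 2 * (p ^ ((i - j) + (j - i)) * (a * b)).
  have e_ij : i + j = minn i j * 2 + ((i - j) + (j - i)) by lia.
  by rewrite mulnACA -expnD e_ij expnD expnM -mulnA.
by rewrite divnMl ?muln_divA // !expn_gt0 p_gt0.
Qed.

Lemma size_filter_primes_pfactor_mul (P : pred nat) k n :
  size [seq q <- primes (p ^ k * n) | P q] <= size [seq q <- primes n | P q] + (k != 0).
Proof.
case: k => [|k]; first by rewrite mul1n addn0.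
rewrite addn1 -[X in _ <= X]/(size (p :: _)).
apply: uniq_leq_size => [|q]; first exact/filter_uniq/primes_uniq.
rewrite mem_filter mem_primes => /andP[Pq /and3P[q_prime n_gt0 q_dvd]].
rewrite inE mem_filter mem_primes q_prime Pq /=.
move: n_gt0; rewrite muln_gt0 => /andP[_ n_gt0].
move: q_dvd; rewrite Euclid_dvdM // Euclid_dvdX // => /orP[/andP[q_dvd_p _]|q_dvd].
  by rewrite -dvdn_prime2 // q_dvd_p.
by rewrite n_gt0 q_dvd orbT.
Qed.

End PadicNat.

Lemma card_fset_set_subset (T : choiceType) (A B : set T) :
  finite_set B -> A `<=` B -> (#|` fset_set A| <= #|` fset_set B|)%N.
Proof.
move=> finB AB; have finA := sub_finite_set AB finB.
by apply: fsubset_leq_card; rewrite -fset_set_sub.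
Qed.

Lemma card_fset_set_proper (T : choiceType) (A B : set T) x :
  finite_set B -> A `<=` B -> B x -> ~ A x -> (#|` fset_set A| < #|` fset_set B|)%N.
Proof.
move=> finB AB Bx NAx; have finA := sub_finite_set AB finB.
apply: fproper_ltn_card; rewrite fproperE; apply/andP; split.
  by rewrite -fset_set_sub.
by apply/negP; rewrite -fset_set_sub // => /(_ x Bx).
Qed.

Lemma fsumr_ge_term (R : realDomainType) (I : choiceType) (P : set I) (F : I -> R) x :
  finite_set (P `&` F @^-1` [set~ 0]) -> (forall i, P i -> 0 <= F i) -> P x ->
  F x <= \sum_(i \in P) F i.
Proof.
move=> finPF F_ge0 Px; rewrite fsbig_supp.
have [->|Fx_neq0] := eqVneq (F x) 0; first by apply: fsumr_ge0 => i [/F_ge0].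
rewrite (fsbigD1 x) //=; last by split=> //; apply/eqP.
by rewrite lerDl fsumr_ge0 // => i [[/F_ge0]].
Qed.

Section Weights.
Variable R : realType.
Implicit Types (f psi theta : nat -> R).

Lemma admissible_fun_le f n : admissible_fun f -> (0 < n)%N -> f n <= n%:R.
Proof.
move=> [f_ge0 [_ f_conv]] n_gt0; apply: le_trans (f_conv _ n_gt0).
rewrite /Defs.conv1 (bigD1_seq n) ?divisors_uniq -?dvdn_divisors //= lerDl.
rewrite big_seq_cond sumr_ge0 // => d /andP[d_div _]; apply: f_ge0.
by apply: (dvdn_gt0 n_gt0); rewrite dvdn_divisors.
Qed.

Lemma mu10 f psi : mu1 f psi 0 = 0.
Proof. by rewrite /mu1 invr0 mulr0. Qed.

Lemma mu1_ge0 f psi v : (forall n, (0 < n)%N -> 0 <= f n) -> nonneg_fin_supp psi ->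
  0 <= mu1 f psi v.
Proof.
move=> f_ge0 [psi_ge0 _]; case: v => [|v]; first by rewrite mu10.
by rewrite !mulr_ge0 ?f_ge0 ?psi_ge0 // invr_ge0.
Qed.

Lemma finite_mu1_supp f psi (V : set nat) : nonneg_fin_supp psi ->
  finite_set (V `&` mu1 f psi @^-1` [set~ 0]).
Proof.
move=> [_ fin_psi]; apply: sub_finite_set fin_psi => -[|v] [_ /= mu_neq0].
  by rewrite mu10 in mu_neq0.
by split=> //; apply/eqP; apply: contra_not mu_neq0 => psi0; rewrite /mu1 psi0 mulr0 mul0r.
Qed.

Lemma muS_ge0 f psi (V : set nat) : admissible_fun f -> nonneg_fin_supp psi ->
  0 <= muS f psi V.
Proof. by move=> [f_ge0 _] psi_nfs; apply: fsumr_ge0 => v _; apply: mu1_ge0. Qed.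

Lemma muS_ge_mu1 f psi (V : set nat) v : admissible_fun f -> nonneg_fin_supp psi -> V v ->
  mu1 f psi v <= muS f psi V.
Proof.
move=> [f_ge0 _] psi_nfs Vv; apply: fsumr_ge_term => //.
- exact: finite_mu1_supp.
- by move=> u _; apply: mu1_ge0.
Qed.

Lemma finite_Pset psi theta : nonneg_fin_supp psi -> nonneg_fin_supp theta ->
  finite_set (Pset psi theta).
Proof.
move=> [_ fin_psi] [_ fin_theta].
apply: (@sub_finite_set _ _ (\bigcup_(v in supp psi) \bigcup_(w in supp theta)
  [set q | (q <= v * w)%N])).
  move=> q [_ [v [w [psi_v [theta_w q_dvd]]]]]; exists v => //; exists w => //=.
  by apply: dvdn_leq q_dvd; rewrite muln_gt0 (proj1 psi_v) (proj1 theta_w).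
apply: bigcup_finite => // v _; apply: bigcup_finite => // w _.
apply: (@sub_finite_set _ _ `I_((v * w).+1)); last exact: finite_II.
by move=> q /=; rewrite ltnS.
Qed.

End Weights.

Section PShift.
Variables (R : realType) (p : nat).
Hypothesis p_prime : prime p.
Implicit Types (f g psi theta : nat -> R) (V W : set nat) (E : set (nat * nat)).

Let pfactor_gt0 k : (0 < p ^ k)%N.
Proof. by rewrite expn_gt0 prime_gt0. Qed.

Let ndvd_gt0 n : ~~ (p %| n)%N -> (0 < n)%N.
Proof. by case: n; rewrite ?dvdn0. Qed.

Definition pshift (i e : nat) psi (n : nat) : R :=
  if (p %| n)%N then 0 else (p ^ e)%:R * psi (p ^ i * n)%N.

Definition pweight f (i e : nat) : R := f (p ^ i)%N / ((p ^ i)%:R * (p ^ e)%:R).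

Definition pfree_fiber (i j : nat) E : set (nat * nat) :=
  [set y | [/\ ~~ (p %| y.1)%N, ~~ (p %| y.2)%N & E ((p ^ i * y.1)%N, (p ^ j * y.2)%N)]].

Lemma supp_pshift i e psi n :
  supp (pshift i e psi) n <-> supp psi (p ^ i * n)%N /\ ~~ (p %| n)%N.
Proof.
rewrite /supp /pshift /=; case: ifP => [_|pNn]; first by split=> [[_ /eqP]|[]].
have n_gt0 : (0 < n)%N by apply: ndvd_gt0; rewrite pNn.
rewrite muln_gt0 pfactor_gt0 n_gt0 mulf_eq0 pnatr_eq0 expn_eq0.
by rewrite (gtn_eqF (prime_gt0 p_prime)); split=> [[]|[[]]].
Qed.

Lemma nonneg_fin_supp_pshift i e psi :
  nonneg_fin_supp psi -> nonneg_fin_supp (pshift i e psi).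
Proof.
move=> [psi_ge0 fin_psi]; split=> [n n_gt0|].
  by rewrite /pshift; case: ifP => // _; rewrite mulr_ge0 ?psi_ge0 ?muln_gt0 ?pfactor_gt0.
apply: (@sub_finite_set _ _ (muln (p ^ i) @^-1` supp psi)).
  by move=> n /supp_pshift[].
by apply: finite_preimage => // m n _ _ /eqP; rewrite eqn_pmul2l // => /eqP.
Qed.

Lemma Pset_pshift_sub i j e e' psi theta :
  Pset (pshift i e psi) (pshift j e' theta) `<=` Pset psi theta.
Proof.
move=> q [q_prime [v [w [/supp_pshift[psi_v _] [/supp_pshift[theta_w _] q_dvd]]]]].
split=> //; exists (p ^ i * v)%N, (p ^ j * w)%N; split=> //; split=> //.
by apply: dvdn_trans q_dvd _; apply: dvdn_mul; apply: dvdn_mull.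
Qed.

Lemma Pset_pshift_notin i j e e' psi theta : ~ Pset (pshift i e psi) (pshift j e' theta) p.
Proof.
move=> [_ [v [w [/supp_pshift[_ pNv] [/supp_pshift[_ pNw] p_dvd]]]]].
by move: p_dvd; rewrite Euclid_dvdM // (negbTE pNv) (negbTE pNw).
Qed.

Lemma mu1_pshift f psi i e n : Defs.multiplicative f -> ~~ (p %| n)%N ->
  mu1 f psi (p ^ i * n)%N = pweight f i e * mu1 f (pshift i e psi) n.
Proof.
move=> [_ f_mul] pNn; rewrite /mu1 /pweight /pshift (negbTE pNn).
rewrite f_mul ?pfactor_gt0 ?ndvd_gt0 ?coprimeXl ?prime_coprime // natrM.
by field; rewrite !pnatr_eq0 -!lt0n ndvd_gt0 ?pfactor_gt0.
Qed.

Lemma mu1_pshift_dvd f psi i e n : (p %| n)%N -> mu1 f (pshift i e psi) n = 0.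
Proof. by move=> p_dvd; rewrite /mu1 /pshift p_dvd mulr0 mul0r. Qed.

Lemma muS_pshift f psi i e V : Defs.multiplicative f ->
  muS f psi [set v | V v /\ logn p v = i] =
  pweight f i e * muS f (pshift i e psi) (muln (p ^ i) @^-1` V).
Proof.
move=> f_mul; rewrite /muS.
rewrite -(fsbig_widen ([set v | V v /\ logn p v = i] `&` [set v | 0 < v]%N)); last 2 first.
- exact: subIsetl.
- (* [logn p 0 = 0], but [v = 0] contributes nothing: [mu1] divides by [0%:R]. *)
  by move=> [|v] [_ /not_andP[]// v_le0]; [apply: mu10 | case: v_le0].
rewrite -[in RHS](fsbig_widen ((muln (p ^ i) @^-1` V) `&` [set m | ~~ (p %| m)%N])); last 2 first.
- exact: subIsetl.
- by move=> m [_ /not_andP[]// /negP/negPn /mu1_pshift_dvd]; apply.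
have -> : [set v | V v /\ logn p v = i] `&` [set v | 0 < v]%N =
    muln (p ^ i) @` ((muln (p ^ i) @^-1` V) `&` [set m | ~~ (p %| m)%N]).
  apply/seteqP; split=> [v [[Vv <-] v_gt0]|_ [m [Vm pNm] <-]].
    have [m pNm v_eq] := logn_eq_pfactor_mul p_prime v_gt0 erefl.
    by exists m => //; split; rewrite /= -?v_eq.
  by split; [split; rewrite ?logn_pfactor_mul | rewrite /= muln_gt0 pfactor_gt0 ndvd_gt0].
rewrite fsbig_image; last by move=> m n _ _; apply: pfactor_mulI.
by rewrite mulr_fsumr; apply: eq_fsbigr => m /[!inE] -[_ pNm]; apply: mu1_pshift.
Qed.

Lemma muE_pshift f g psi theta i j e e' V W E :
  Defs.multiplicative f -> Defs.multiplicative g ->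
  E `<=` [set x | (0 < x.1)%N /\ (0 < x.2)%N] `&` (V `*` W) ->
  muE f g psi theta
    (E `&` ([set v | V v /\ logn p v = i] `*` [set w | W w /\ logn p w = j])) =
  pweight f i e * pweight g j e' *
    muE f g (pshift i e psi) (pshift j e' theta) (pfree_fiber i j E).
Proof.
move=> f_mul g_mul E_sub; rewrite /muE.
have -> : E `&` ([set v | V v /\ logn p v = i] `*` [set w | W w /\ logn p w = j]) =
    (fun y => (p ^ i * y.1, p ^ j * y.2)%N) @` pfree_fiber i j E.
  apply/seteqP; split=> [[v w] [Evw [[_ <-] [_ <-]]]|_ [[m n] [pNm pNn Emn] <-]].
    have [[v_gt0 w_gt0] _] := E_sub _ Evw.
    have [m pNm v_eq] := logn_eq_pfactor_mul p_prime v_gt0 erefl.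
    have [n pNn w_eq] := logn_eq_pfactor_mul p_prime w_gt0 erefl.
    by exists (m, n); [split; rewrite /= -?v_eq -?w_eq | rewrite /= -v_eq -w_eq].
  have [_ [Vm Wn]] := E_sub _ Emn.
  by split=> //; split; split; rewrite // logn_pfactor_mul.
rewrite fsbig_image; last first.
  by move=> [m n] [m' n'] _ _ [/(pfactor_mulI p_prime) -> /(pfactor_mulI p_prime) ->].
rewrite mulr_fsumr; apply: eq_fsbigr => -[m n] /[!inE] -[/= pNm pNn _].
by rewrite (mu1_pshift _ _ e f_mul pNm) (mu1_pshift _ _ e' g_mul pNn); ring.
Qed.

Lemma Dpt_pshift psi theta i j y1 y2 : ~~ (p %| y1)%N -> ~~ (p %| y2)%N ->
  Dpt (pshift i (j - i) psi) (pshift j (i - j) theta) y1 y2 =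
  Dpt psi theta (p ^ i * y1)%N (p ^ j * y2)%N.
Proof.
move=> pNy1 pNy2; rewrite /Dpt /pshift (negbTE pNy1) (negbTE pNy2) gcdn_pfactor_mul //.
set P : R := (p ^ minn i j)%:R.
have P_neq0 : P != 0 by rewrite pnatr_eq0 -lt0n pfactor_gt0.
have pow_split k l : minn i j = minn k l -> (p ^ k)%:R = P * (p ^ (k - l))%:R :> R.
  by move=> min_eq; rewrite -natrM -expnD min_eq; congr (_ ^ _)%:R; lia.
rewrite !natrM (pow_split i j) // (pow_split j i (minnC i j)) -!mulrA.
rewrite ![(p ^ (_ - _))%:R * (_ * _)]mulrCA -maxr_pMr ?ler0n //.
by rewrite invfM mulrACA mulfV // mul1r.
Qed.

Lemma omega_t_pfactor_mul t i j y1 y2 : ~~ (p %| y1)%N -> ~~ (p %| y2)%N ->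
  (omega_t (R:=R) t (p ^ i * y1) (p ^ j * y2) <= omega_t (R:=R) t y1 y2 + (i != j))%N.
Proof.
move=> pNy1 pNy2; rewrite /omega_t mul_divn_gcdn_sqr_pfactor //.
have -> : (i != j) = ((i - j) + (j - i) != 0)%N by apply/idP/idP; lia.
exact: size_filter_primes_pfactor_mul.
Qed.

Lemma pweight_ge0 f i e : admissible_fun f -> 0 <= pweight f i e.
Proof. by move=> [f_ge0 _]; rewrite divr_ge0 ?mulr_ge0 ?ler0n ?f_ge0. Qed.

Lemma pweight_le f i e : admissible_fun f -> pweight f i e <= ((p ^ e)%:R)^-1.
Proof.
move=> f_adm; rewrite /pweight invfM mulrA ler_piMl ?invr_ge0 ?ler0n //.
by rewrite ler_pdivrMr ?ltr0n ?pfactor_gt0 // mul1r admissible_fun_le.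
Qed.

End PShift.

Lemma powR_split (R : realType) (c a : R) : 0 <= c -> c `^ (1 - a) * c `^ a = c.
Proof. by move=> c_ge0; rewrite -powRD ?subrK ?powRr1 // oner_eq0. Qed.

Lemma ratio_le_powR (R : realType) (A L a P P' ip c X N N' M M' ex e1 : R) :
  A `^ P * L * (N * ex) `^ a < M ->
  M' <= A `^ P' * L * (N' * (ex * e1)) `^ a ->
  1 <= A -> 0 < L -> 0 <= a -> 0 < N -> 0 <= N' -> 0 < ex -> 0 <= e1 -> 0 <= c ->
  c `^ (1 - a) <= X -> P' + ip <= P ->
  c * M' / M <= A `^ (- ip) * X * (c * N' / N * e1) `^ a.
Proof.
move=> M_gt M'_le A_ge1 L_gt0 a_ge0 N_gt0 N'_ge0 ex_gt0 e1_ge0 c_ge0 cX PP'.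
have A_gt0 : 0 < A by apply: lt_le_trans A_ge1.
set D := A `^ P * L * (N * ex) `^ a.
have D_gt0 : 0 < D by rewrite !mulr_gt0 ?powR_gt0 ?mulr_gt0.
have M_gt0 : 0 < M by apply: lt_trans M_gt.
set Y := A `^ (- ip) * X * _.
have Y_ge0 : 0 <= Y by rewrite !mulr_ge0 ?powR_ge0 // (le_trans _ cX) ?powR_ge0.
rewrite ler_pdivrMr //; apply: le_trans (ler_wpM2l Y_ge0 (ltW M_gt)).
have cN_ge0 : 0 <= c * N' / N * e1 by rewrite !mulr_ge0 // invr_ge0 ltW.
have DY : Y * D = A `^ (P - ip) * L * X * (c `^ a * (N' * (ex * e1)) `^ a).
  have -> : Y * D = A `^ (- ip) * A `^ P * L * X * ((c * N' / N * e1) `^ a * (N * ex) `^ a).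
    by rewrite /Y /D; ring.
  have Nex_ge0 : 0 <= N * ex by rewrite mulr_ge0 // ltW.
  have Z_ge0 : 0 <= N' * (ex * e1) by rewrite !mulr_ge0 // ltW.
  rewrite -powRD ?(gt_eqF A_gt0) ?implybT // addrC -(powRM _ cN_ge0 Nex_ge0).
  rewrite -(powRM _ c_ge0 Z_ge0).
  by congr (_ * _ `^ a); field; rewrite gt_eqF.
rewrite DY -{1}(powR_split a c_ge0).
have AP : A `^ P' <= A `^ (P - ip) by apply: ler_powR; rewrite // lerBrDr.
apply: (le_trans (ler_wpM2l _ M'_le)); first by rewrite mulr_ge0 ?powR_ge0.
rewrite [leRHS](_ : _ = X * c `^ a * (A `^ (P - ip) * L * (N' * (ex * e1)) `^ a)); last by ring.
apply: ler_pM; rewrite ?mulr_ge0 ?powR_ge0 ?(ltW L_gt0) //.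
  by rewrite ler_wpM2r ?powR_ge0.
by rewrite ler_wpM2r ?powR_ge0 // ler_wpM2r ?(ltW L_gt0).
Qed.

Lemma norm_natrB (R : realDomainType) (i j : nat) :
  `|i%:R - j%:R| = ((i - j) + (j - i))%N%:R :> R.
Proof.
have [le_ij|/ltnW le_ji] := leqP i j.
  have -> : (i - j = 0)%N by lia.
  by rewrite add0n distrC ger0_norm ?subr_ge0 ?ler_nat // natrB.
have -> : (j - i = 0)%N by lia.
by rewrite addn0 ger0_norm ?subr_ge0 ?ler_nat // natrB.
Qed.

Lemma pweight_mul_powR_le (R : realType) (f g : nat -> R) p i j (a : R) :
  prime p -> admissible_fun f -> admissible_fun g -> 0 <= a ->
  (pweight p f i (j - i) * pweight p g j (i - j)) `^ a <= p%:R `^ (- `|i%:R - j%:R| * a).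
Proof.
move=> p_prime f_adm g_adm a_ge0.
rewrite norm_natrB powRrM powR_invn ?ler0n // -natrX.
apply: ge0_ler_powR => //; first by rewrite nnegrE mulr_ge0 ?pweight_ge0.
  by rewrite nnegrE invr_ge0 ler0n.
rewrite expnD natrM invfM mulrC.
by apply: ler_pM; rewrite ?pweight_ge0 ?pweight_le.
Qed.

Section PsetProper.
Variables (R : realType) (psi theta psi' theta' : nat -> R) (p : nat).
Hypotheses (psi_nfs : nonneg_fin_supp psi) (theta_nfs : nonneg_fin_supp theta).
Hypotheses (P_sub : Pset psi' theta' `<=` Pset psi theta)
  (p_in : Pset psi theta p) (p_notin : ~ Pset psi' theta' p).

Lemma cardP_proper : (cardP psi' theta' < cardP psi theta)%N.
Proof. exact: card_fset_set_proper (finite_Pset psi_nfs theta_nfs) P_sub p_in p_notin. Qed.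

Lemma PbigD1_le p0 eps C :
  Pbig p0 psi' theta' eps C + (if p%:R <= p0 eps C then 1 else 0) <= Pbig p0 psi theta eps C.
Proof.
set S := [set q | (1 <= q)%N /\ q%:R <= p0 eps C].
have finPS : finite_set (Pset psi theta `&` S) by apply/finite_setIl/finite_Pset.
have subPS : Pset psi' theta' `&` S `<=` Pset psi theta `&` S by apply: setSI.
rewrite /Pbig -addrA lerD2l; case: ifP => p_le; last first.
  by rewrite addr0 ler_nat card_fset_set_subset.
rewrite natr1 ler_nat (card_fset_set_proper finPS subPS (x := p)) //.
  by split=> //; split=> //; apply/prime_gt0; case: p_in.
by case.
Qed.

End PsetProper.

Lemma muS_gt0_of_muE (R : realType) (f g psi theta : nat -> R) V W E :
  admissible_fun f -> admissible_fun g -> nonneg_fin_supp psi -> nonneg_fin_supp theta ->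
  E `<=` V `*` W -> 0 < muE f g psi theta E -> 0 < muS f psi V /\ 0 < muS g theta W.
Proof.
move=> f_adm g_adm psi_nfs theta_nfs E_sub /(fsumr_gt0 [::])[[v w] /E_sub[Vv Ww] /= mu_gt0].
have mu_v_ge0 : 0 <= mu1 f psi v by apply: mu1_ge0 (proj1 f_adm) psi_nfs.
have mu_w_ge0 : 0 <= mu1 g theta w by apply: mu1_ge0 (proj1 g_adm) theta_nfs.
have mu_v_gt0 : 0 < mu1 f psi v.
  by rewrite lt_def mu_v_ge0 andbT; apply: contraTneq mu_gt0 => ->; rewrite mul0r ltxx.
have mu_w_gt0 : 0 < mu1 g theta w by rewrite -(pmulr_rgt0 _ mu_v_gt0).
split; first exact: lt_le_trans mu_v_gt0 (muS_ge_mu1 f_adm psi_nfs Vv).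
exact: lt_le_trans mu_w_gt0 (muS_ge_mu1 g_adm theta_nfs Ww).
Qed.

Section MinimalCounterexample.
Variables (R : realType) (p0 : R -> R -> R) (psi theta : nat -> R) (eps C t K : R).
Variables (f g : nat -> R) (V W : set nat) (E : set (nat * nat)).
Hypothesis E_counter : counterexample p0 psi theta eps C t K f g V W E.
Hypothesis E_min : forall (psi' theta' : nat -> R) (eps' C' t' K' : R) (f' g' : nat -> R)
  (V' W' : set nat) (E' : set (nat * nat)),
  counterexample p0 psi' theta' eps' C' t' K' f' g' V' W' E' ->
  (cardP psi theta <= cardP psi' theta')%N.
Variables (p i j : nat).
Hypothesis p_in : Pset psi theta p.

Local Notation psi' := (pshift p i (j - i) psi).
Local Notation theta' := (pshift p j (i - j) theta).
Local Notation i_neq_j := (if i != j then 1 else 0 : R).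

Let p_prime : prime p. Proof. by case: p_in. Qed.

Let P_sub : Pset psi' theta' `<=` Pset psi theta.
Proof. exact: Pset_pshift_sub. Qed.

Let p_notin : ~ Pset psi' theta' p.
Proof. exact: Pset_pshift_notin. Qed.

Lemma counterexample_pos_sub : E `<=` [set x | (0 < x.1)%N /\ (0 < x.2)%N] `&` (V `*` W).
Proof.
have [_ _ _ _ [_ E_sub _]] := E_counter.
by move=> x /E_sub[[[x1_gt0 _] [[x2_gt0 _] _]] VW_x].
Qed.

Lemma counterexample_muS_gt0 : 0 < muS f psi V /\ 0 < muS g theta W.
Proof.
have [_ _ [psi_nfs theta_nfs] [f_adm g_adm] [_ _ E_big]] := E_counter.
have E_VW : E `<=` V `*` W by move=> x /counterexample_pos_sub[].
apply: (muS_gt0_of_muE f_adm g_adm psi_nfs theta_nfs E_VW).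
by apply: le_lt_trans E_big; rewrite !mulr_ge0 ?powR_ge0.
Qed.

Lemma pfree_fiber_sub : pfree_fiber p i j E `<=`
  Eset psi' theta' t (K - i_neq_j) `&` (muln (p ^ i) @^-1` V `*` muln (p ^ j) @^-1` W).
Proof.
have [_ _ _ _ [_ E_sub _]] := E_counter.
move=> [y1 y2] [/= pNy1 pNy2 /E_sub[[/= psi_v [theta_w [D_le K_le]]] [Vv Ww]]].
split=> //; split; first exact/supp_pshift.
split; first exact/supp_pshift.
split; first by rewrite /= Dpt_pshift.
move: K_le (omega_t_pfactor_mul (R := R) p_prime t i j pNy1 pNy2).
by rewrite -(ler_nat R) natrD; case: (i != j) => /=; lra.
Qed.

Lemma Pbig_pshift_le (psi_nfs : nonneg_fin_supp psi) (theta_nfs : nonneg_fin_supp theta) :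
  Pbig p0 psi' theta' eps C + (if p%:R <= p0 eps C then 1 else 0) <= Pbig p0 psi theta eps C.
Proof.
exact: (PbigD1_le psi_nfs theta_nfs P_sub p_in p_notin p0 eps C).
Qed.

Lemma muE_pfree_fiber_le :
  muE f g psi' theta' (pfree_fiber p i j E) <=
  (100 * expR C) `^ (Pbig p0 psi' theta' eps C) * Logt t `^ ((expR (40 * C) - 1) / 2) *
  (muS f psi' (muln (p ^ i) @^-1` V) * muS g theta' (muln (p ^ j) @^-1` W) *
   (expR (- (C * K)) * expR (i_neq_j * C))) `^ (1 / 2 + eps).
Proof.
have [eps_range C_gt0 [psi_nfs theta_nfs] fg_adm [t_ge1 _ _]] := E_counter.
rewrite -expRD (_ : - (C * K) + i_neq_j * C = - (C * (K - i_neq_j))); last by ring.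
rewrite leNgt; apply/negP => E'_big.
have /E_min : counterexample p0 psi' theta' eps C t (K - i_neq_j) f g
    (muln (p ^ i) @^-1` V) (muln (p ^ j) @^-1` W) (pfree_fiber p i j E).
  split=> //; first by split; apply: nonneg_fin_supp_pshift.
  by split=> //; apply: pfree_fiber_sub.
apply/negP; rewrite -ltnNge.
exact: cardP_proper psi_nfs theta_nfs P_sub p_in p_notin.
Qed.

End MinimalCounterexample.

Unset Implicit Arguments.

Theorem lemma3p1 (R : realType) (p0 : R -> R -> R)
  (hp0 : forall e c : R, 0 < e <= 2 / 5 -> 0 < c -> 0 < p0 e c)
  (psi theta : nat -> R) (eps C t K : R) (f g : nat -> R)
  (V W : set nat) (E : set (nat * nat))
  (hce : counterexample p0 psi theta eps C t K f g V W E)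
  (hmin : forall (psi' theta' : nat -> R) (eps' C' t' K' : R) (f' g' : nat -> R)
            (V' W' : set nat) (E' : set (nat * nat)),
            counterexample p0 psi' theta' eps' C' t' K' f' g' V' W' E' ->
            (cardP psi theta <= cardP psi' theta')%N)
  (p : nat) (hp : Pset psi theta p) (i j : nat) :
  let Vi := [set v | V v /\ logn p v = i] in
  let Wj := [set w | W w /\ logn p w = j] in
  let m := muE f g psi theta (E `&` (Vi `*` Wj)) / muE f g psi theta E in
  let alpha := muS f psi Vi / muS f psi V in
  let beta := muS g theta Wj / muS g theta W in
  let q := 2 / (1 - 2 * eps) in
  let q' := 2 / (1 + 2 * eps) in
  m <= (100 * expR C) `^ (- (if p%:R <= p0 eps C then 1 else 0))
       * (p%:R) `^ (- `|i%:R - j%:R| / q)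
       * (alpha * beta * expR ((if i != j then 1 else 0) * C)) `^ (1 / q').
Proof.
cbv zeta.
have [/andP[eps_gt0 eps_le] C_gt0 [psi_nfs theta_nfs] [f_adm g_adm] [_ _ E_big]] := hce.
have [[_ [f_mul _]] [_ [g_mul _]]] := (f_adm, g_adm); have [p_prime _] := hp.
have [MV_gt0 MW_gt0] := counterexample_muS_gt0 hce.
rewrite (muS_pshift p_prime psi i (j - i) V f_mul).
rewrite (muS_pshift p_prime theta j (i - j) W g_mul).
rewrite (muE_pshift p_prime psi theta i j (j - i) (i - j) f_mul g_mul (counterexample_pos_sub hce)).
rewrite [in leRHS]mulf_div [in leRHS]mulrACA (_ : 1 / (2 / (1 + 2 * eps)) = 1 / 2 + eps); last by field; lra.
apply: (ratio_le_powR E_big (muE_pfree_fiber_le hce hmin i j hp)).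
- by have := expR_ge1Dx C; lra.
- by apply: powR_gt0; rewrite /Logt lt_max ltr01.
- by lra.
- exact: mulr_gt0.
- by apply: mulr_ge0; apply: muS_ge0 => //; apply: nonneg_fin_supp_pshift.
- exact: expR_gt0.
- exact: expR_ge0.
- by apply: mulr_ge0; apply: pweight_ge0.
- rewrite (_ : - _ / _ = - `|i%:R - j%:R| * (1 - (1 / 2 + eps))); last by field; lra.
  by apply: pweight_mul_powR_le => //; lra.
- exact: Pbig_pshift_le.
Qed.
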